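(* Let $n\ge 6$ be even. If $n\equiv 2\pmod 4$, no circulant or back-circulant Latin square of order $n$ with inner distance $\frac n2-1$ is a row product. If $n\equiv 0\pmod 4$, exactly $2$ circulant and exactly $2$ back-circulant Latin squares of order $n$ with inner distance $\frac n2-1$ and symbol $1$ in cell $(1,1)$ are row products.
   Context: Symbols are $[1,n]$; $\mathrm{dist}(a,b)$ is the minimum of the residues of $a-b$ and $b-a$ modulo $n$. The inner distance of a Latin square is the minimum of $\mathrm{dist}$ over symbols in horizontally or vertically adjacent cells. A circulant Latin square: each row $i+1$ is row $i$ cyclically shifted one position right; back-circulant: shifted one position left. For a Latin square $L=(m_{i,j})$, $H$ is the $n\times(n-1)$ matrix with $h_{i,j}\equiv m_{i,j+1}-m_{i,j}\pmod n$ and $V$ the $(n-1)\times n$ matrix with $v_{i,j}\equiv m_{i+1,j}-m_{i,j}\pmod n$ (entries in $[0,n-1]$). The difference row of a Latin row $(s_1,\dots,s_n)$ is $(h_1,\dots,h_{n-1})$ with $h_j\equiv s_{j+1}-s_j\pmod n$. A row product is a Latin square obtained by adding a constant mod $n$ to all entries of $\mathrm{prod}(d,d')$, the $n\times n$ matrix with $1$ in cell $(1,1)$ whose $H$ has every row equal to a difference row $d$ and whose $V$ has every column equal to a difference row $d'$. *)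

(* Latin squares of order n are matrices 'M[nat]_n with
   symbols in [1,n]; rows/columns are indexed 0..n-1 (so the paper's cell
   (1,1) is (0,0) here). *)
From mathcomp Require Import all_boot all_order all_algebra.
Set Implicit Arguments.
Unset Strict Implicit.
Unset Printing Implicit Defensive.

Definition dist (n a b : nat) : nat :=
  minn ((a + n - b) %% n) ((b + n - a) %% n).

Definition latin (n : nat) (A : 'M[nat]_n) : Prop :=
  [/\ forall i j, 1 <= A i j <= n,
      forall i, injective (fun j => A i j)
    & forall j, injective (fun i => A i j)].

Definition adj (n : nat) (p q : 'I_n * 'I_n) : bool :=
  ((p.1 == q.1 :> nat) && (p.2.+1 == q.2 :> nat)) ||
  ((p.2 == q.2 :> nat) && (p.1.+1 == q.1 :> nat)).

(* inner distance: minimum of dist over adjacent cells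
   (the default value n is only used when there are no adjacent cells) *)
Definition innerdist (n : nat) (A : 'M[nat]_n) : nat :=
  \big[minn/n]_(p : 'I_n * 'I_n) \big[minn/n]_(q : 'I_n * 'I_n | adj p q)
     dist n (A p.1 p.2) (A q.1 q.2).

Definition circulant (n : nat) (A : 'M[nat]_n) : Prop :=
  forall i i' j j' : 'I_n, i' = i.+1 :> nat -> j' = j.+1 %% n :> nat ->
    A i' j' = A i j.

Definition back_circulant (n : nat) (A : 'M[nat]_n) : Prop :=
  forall i i' j j' : 'I_n, i' = i.+1 :> nat -> j' = j.+1 %% n :> nat ->
    A i' j = A i j'.

Definition one_at_origin (n : nat) (A : 'M[nat]_n) : Prop :=
  forall i j : 'I_n, i = 0 :> nat -> j = 0 :> nat -> A i j = 1.

Definition latin_row (n : nat) (s : seq nat) : Prop :=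
  [/\ size s = n, uniq s & all (fun x => 1 <= x <= n) s].

Definition diff_row (n : nat) (s : seq nat) : seq nat :=
  [seq (nth 0 s j.+1 + n - nth 0 s j) %% n | j <- iota 0 n.-1].

Definition is_diff_row (n : nat) (d : seq nat) : Prop :=
  exists s, latin_row n s /\ d = diff_row n s.

(* prod(d,d'): the n x n matrix with 1 in the top-left cell whose H has every
   row equal to d and whose V has every column equal to d'; explicitly
   m_{i,j} = 1 + (d'_1+...+d'_{i-1}) + (d_1+...+d_{j-1}) mod n, in [1,n]. *)
Definition prodm (n : nat) (d d' : seq nat) : 'M[nat]_n :=
  \matrix_(i < n, j < n)
     ((\sum_(k < i) nth 0 d' k + \sum_(k < j) nth 0 d k) %% n).+1.

(* row product: prod(d,d') plus a constant mod n (symbols stay in [1,n]) *)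
Definition row_product (n : nat) (A : 'M[nat]_n) : Prop :=
  exists d d' c, [/\ is_diff_row n d, is_diff_row n d' &
    forall i j, A i j = (((prodm n d d' i j).-1 + c) %% n).+1].

(* A row product has entries 1 + (D'_i + D_j + c) mod n, with D and D' prefix
   sums of difference rows.  Being circulant (resp. back-circulant) forces every
   row difference and every column difference to be constant, equal to -t and t
   (resp. t and t), so the square is the linear square 1 + (i u + j t + c) mod n.
   Its inner distance is min(t, n - t), hence t = n/2 +- 1.  If n/2 is odd then
   t is even, so (n/2) t = 0 (mod n) and the first row repeats a symbol.  If n/2
   is even then n/2 +- 1 is odd and coprime to n/2, hence a unit mod n; both
   choices of t give Latin row products, and the symbol 1 in the corner fixes c. *)

From mathcomp Require Import all_boot all_order all_algebra.
From mathcomp Require Import zify.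

Import Order.TTheory.

Set Implicit Arguments.
Unset Strict Implicit.
Unset Printing Implicit Defensive.

Lemma eqn_modMr_coprime d p m n :
  coprime p d -> (m * p == n * p %[mod d]) = (m == n %[mod d]).
Proof.
move=> co_pd; wlog le_nm : m n / n <= m.
  by move=> IH; case: (leqP n m) => [|/ltnW] /IH //; rewrite eq_sym => ->; rewrite eq_sym.
by rewrite !eqn_mod_dvd ?leq_mul2r ?le_nm ?orbT // -mulnBl Gauss_dvdl // coprime_sym.
Qed.

Lemma modn_subD n x y t : 0 < n ->
  y + t = x %[mod n] -> (x %% n + n - y %% n) %% n = t %% n.
Proof.
move=> n_gt0 e; apply/eqP; rewrite -(eqn_modDl y) e -modnDml.
rewrite subnKC ?modnDr ?modn_mod //.
by rewrite (leq_trans (ltnW (ltn_pmod _ n_gt0))) ?leq_addl.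
Qed.

Lemma subnK_modnn n t : t <= n -> n - t + t = 0 %[mod n].
Proof. by move=> le_tn; rewrite subnK ?modnn ?mod0n. Qed.

Definition shift_dist (n t : nat) : nat := minn ((n - t) %% n) t.

Lemma dist_shift n x y t : t < n ->
  x + t = y %[mod n] -> dist n (x %% n).+1 (y %% n).+1 = shift_dist n t.
Proof.
move=> lt_tn e; have n_gt0 : 0 < n by apply: leq_ltn_trans lt_tn.
have e' : y + (n - t) = x %[mod n].
  by rewrite -modnDml -e modnDml -addnA subnKC ?modnDr // ltnW.
by rewrite /dist !addSn !subSS (modn_subD n_gt0 e') (modn_subD n_gt0 e) (modn_small lt_tn).
Qed.

Lemma dist_sym n a b : dist n a b = dist n b a.
Proof. exact: minnC. Qed.

Lemma innerdist_const n (A : 'M[nat]_n) D : 1 < n -> D <= n ->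
  (forall p q, adj p q -> dist n (A p.1 p.2) (A q.1 q.2) = D) ->
  innerdist A = D.
Proof.
move=> n_gt1 le_Dn distA; have n_gt0 := ltnW n_gt1.
set p0 := (Ordinal n_gt0, Ordinal n_gt0); set q0 := (Ordinal n_gt0, Ordinal n_gt1).
have adj0 : adj p0 q0 by [].
rewrite /innerdist -minEnat; apply/le_anti/andP; split.
- apply: le_trans (bigmin_le _ p0 _) _.
  by rewrite (le_trans (bigmin_le_cond _ _ adj0)) // distA.
- apply/bigmin_geP; split=> // p _.
  by apply/bigmin_geP; split=> // q /distA ->.
Qed.

Definition linear_square n u t c : 'M[nat]_n :=
  \matrix_(i < n, j < n) ((i * u + j * t + c) %% n).+1.

Lemma innerdist_linear_square n u t c : 1 < n -> t < n ->
  u = t %[mod n] \/ u + t = 0 %[mod n] ->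
  innerdist (linear_square n u t c) = shift_dist n t.
Proof.
move=> n_gt1 lt_tn ut; apply: innerdist_const => //.
  by rewrite /shift_dist geq_min (ltnW lt_tn) orbT.
move=> [i j] [i' j']; rewrite !mxE => /orP[] /andP[/eqP <- /eqP <-] /=.
  by apply: dist_shift => //; rewrite mulSn; congr (_ %% _); lia.
have -> : i.+1 * u + j * t + c = (i * u + j * t + c) + u by lia.
case: ut => ut.
  by apply: dist_shift; rewrite // -modnDmr -ut modnDmr.
by rewrite dist_sym; apply: dist_shift; rewrite // -addnA -modnDmr ut mod0n addn0.
Qed.

Lemma shift_dist_double_eq h t : 0 < h -> t < h.*2 ->
  shift_dist h.*2 t = h - 1 <-> t = h - 1 \/ t = h + 1.
Proof.
rewrite /shift_dist; case: t => [|t] h_gt0 lt_t; first by rewrite subn0 modnn; lia.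
by rewrite modn_small; lia.
Qed.

Definition prefix_sum (d : seq nat) (i : nat) : nat := \sum_(k < i) nth 0 d k.

Lemma prefix_sumS d i : prefix_sum d i.+1 = prefix_sum d i + nth 0 d i.
Proof. exact: big_ord_recr. Qed.

Lemma prefix_sum_mod n d t i :
  (forall k, k < i -> nth 0 d k = t %[mod n]) -> prefix_sum d i = i * t %[mod n].
Proof.
move=> dE; rewrite /prefix_sum -modn_summ (eq_bigr (fun _ => t %% n)) => [|k _].
  by rewrite sum_nat_const card_ord modnMmr.
exact: dE.
Qed.

Lemma row_product_prefix_sums n (A : 'M[nat]_n) : row_product A ->
  exists d d' c, forall i j, A i j = ((prefix_sum d' i + prefix_sum d j + c) %% n).+1.
Proof.
by case=> d [d' [c [_ _ A_def]]]; exists d, d', c => i j; rewrite A_def mxE modnDml.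
Qed.

Section PrefixSumSquares.

Variables (n c : nat) (d d' : seq nat) (A : 'M[nat]_n).
Hypothesis A_def : forall i j, A i j = ((prefix_sum d' i + prefix_sum d j + c) %% n).+1.

Lemma circulant_steps : circulant A ->
  forall i j, i < n.-1 -> j < n.-1 -> nth 0 d' i + nth 0 d j = 0 %[mod n].
Proof.
move=> cA i j lt_i lt_j; have lt_i1 : i.+1 < n by lia. have lt_j1 : j.+1 < n by lia.
have := cA (Ordinal (ltnW lt_i1)) (Ordinal lt_i1) (Ordinal (ltnW lt_j1)) (Ordinal lt_j1)
  erefl (esym (modn_small lt_j1)).
rewrite !A_def /= !prefix_sumS => -[] /eqP.
set x := prefix_sum d' i + prefix_sum d j + c.
have -> : prefix_sum d' i + nth 0 d' i + (prefix_sum d j + nth 0 d j) + c =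
  x + (nth 0 d' i + nth 0 d j) by rewrite /x; lia.
by rewrite -{2}[x]addn0 eqn_modDl => /eqP.
Qed.

Lemma back_circulant_steps : back_circulant A ->
  forall i j, i < n.-1 -> j < n.-1 -> nth 0 d' i = nth 0 d j %[mod n].
Proof.
move=> bA i j lt_i lt_j; have lt_i1 : i.+1 < n by lia. have lt_j1 : j.+1 < n by lia.
have := bA (Ordinal (ltnW lt_i1)) (Ordinal lt_i1) (Ordinal (ltnW lt_j1)) (Ordinal lt_j1)
  erefl (esym (modn_small lt_j1)).
rewrite !A_def /= !prefix_sumS => -[] /eqP.
set x := prefix_sum d' i + prefix_sum d j + c.
have -> : prefix_sum d' i + nth 0 d' i + prefix_sum d j + c = x + nth 0 d' i by lia.
have -> : prefix_sum d' i + (prefix_sum d j + nth 0 d j) + c = x + nth 0 d j by lia.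
by rewrite eqn_modDl => /eqP.
Qed.

Lemma prefix_sums_linear_square u t :
  (forall k, k < n.-1 -> nth 0 d' k = u %[mod n]) ->
  (forall k, k < n.-1 -> nth 0 d k = t %[mod n]) -> A = linear_square n u t c.
Proof.
move=> d'E dE; apply/matrixP => i j; rewrite A_def mxE.
have lt_pred (k : 'I_n) l : l < k -> l < n.-1 by have := ltn_ord k; lia.
have S'E : prefix_sum d' i = i * u %[mod n] by apply: prefix_sum_mod => l /lt_pred /d'E.
have SE : prefix_sum d j = j * t %[mod n] by apply: prefix_sum_mod => l /lt_pred /dE.
by rewrite -modnDml -(modnDm (prefix_sum d' i)) S'E SE modnDm modnDml.
Qed.

Hypothesis n_gt1 : 1 < n.

Lemma circulant_prefix_sums :
  circulant A -> exists2 t, t < n & A = linear_square n (n - t) t c.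
Proof.
move=> cA; have lt_0 : 0 < n.-1 by rewrite -subn1 subn_gt0.
have steps := circulant_steps cA.
set t := nth 0 d 0 %% n; have lt_t : t < n by rewrite ltn_pmod // ltnW.
exists t => //; apply: prefix_sums_linear_square => k lt_k; apply/eqP.
- by rewrite -(eqn_modDr t) subnK ?(ltnW lt_t) // modnn modnDmr steps ?mod0n.
- by rewrite /t modn_mod -(eqn_modDl (nth 0 d' 0)) !steps.
Qed.

Lemma back_circulant_prefix_sums :
  back_circulant A -> exists2 t, t < n & A = linear_square n t t c.
Proof.
move=> bA; have lt_0 : 0 < n.-1 by rewrite -subn1 subn_gt0.
have steps := back_circulant_steps bA.
set t := nth 0 d 0 %% n; have lt_t : t < n by rewrite ltn_pmod // ltnW.
exists t => //; apply: prefix_sums_linear_square => k lt_k; apply/eqP; rewrite /t modn_mod.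
- by rewrite (steps _ 0).
- by rewrite -(steps 0 k) // (steps 0 0).
Qed.

End PrefixSumSquares.

Lemma modn_affine_inj n t x j1 j2 : j1 < n -> j2 < n -> coprime t n ->
  j1 * t + x = j2 * t + x %[mod n] -> j1 = j2.
Proof.
move=> lt_j1 lt_j2 co_tn /eqP.
by rewrite eqn_modDr eqn_modMr_coprime // !modn_small // => /eqP.
Qed.

Lemma latin_linear_square n u t c :
  coprime u n -> coprime t n -> latin (linear_square n u t c).
Proof.
move=> co_un co_tn; split=> [i j | i j1 j2 | j i1 i2]; rewrite !mxE.
- by rewrite ltn_pmod // (leq_ltn_trans _ (ltn_ord i)).
- move=> [] e; apply/val_inj.
  apply: (modn_affine_inj (x := i * u + c) (ltn_ord j1) (ltn_ord j2) co_tn).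
  have rowE (k : nat) : k * t + (i * u + c) = i * u + k * t + c by lia.
  by rewrite !rowE.
- move=> [] e; apply/val_inj.
  apply: (modn_affine_inj (x := j * t + c) (ltn_ord i1) (ltn_ord i2) co_un).
  by rewrite !addnA.
Qed.

Definition step_row n t : seq nat := [seq (k * t %% n).+1 | k <- iota 0 n].

Lemma latin_step_row n t : coprime t n -> latin_row n (step_row n t).
Proof.
move=> co_tn; split; first by rewrite size_map size_iota.
- rewrite map_inj_in_uniq ?iota_uniq // => a b; rewrite !mem_iota !add0n.
  move=> /andP[_ lt_a] /andP[_ lt_b] [] e.
  by apply: (modn_affine_inj (x := 0) lt_a lt_b co_tn); rewrite !addn0.
- apply/allP => x /mapP[k]; rewrite mem_iota => /andP[_ lt_k] ->.
  by rewrite ltn_pmod // (leq_ltn_trans _ lt_k).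
Qed.

Lemma diff_step_row n t j : j < n.-1 -> nth 0 (diff_row n (step_row n t)) j = t %% n.
Proof.
move=> lt_j; have n_gt0 : 0 < n by lia.
rewrite /diff_row (nth_map 0) ?size_iota // nth_iota // add0n.
rewrite /step_row !(nth_map 0) ?size_iota ?nth_iota ?add0n; try lia.
by rewrite addSn subSS (modn_subD (t := t) n_gt0) // mulSn addnC.
Qed.

Lemma prodm_step_rows n u t :
  prodm n (diff_row n (step_row n t)) (diff_row n (step_row n u)) = linear_square n u t 0.
Proof.
apply: (prefix_sums_linear_square (d := diff_row n (step_row n t))
                                   (d' := diff_row n (step_row n u)))
  => [i j|k lt_k|k lt_k]; by rewrite ?mxE ?addn0 ?diff_step_row ?modn_mod.
Qed.

Lemma row_product_linear_square n u t c :
  coprime u n -> coprime t n -> row_product (linear_square n u t c).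
Proof.
move=> co_un co_tn; exists (diff_row n (step_row n t)), (diff_row n (step_row n u)), c.
split; [by exists (step_row n t); split; first exact: latin_step_row
       |by exists (step_row n u); split; first exact: latin_step_row|].
by move=> i j; rewrite prodm_step_rows !mxE /= addn0 modnDml.
Qed.

Lemma linear_form_mod n u t c i j i' j' : i = i' %[mod n] -> j = j' %[mod n] ->
  i * u + j * t + c = i' * u + j' * t + c %[mod n].
Proof.
move=> ei ej; rewrite -modnDml -(modnDm (i * u)) -modnMml ei modnMml.
by rewrite -(modnMml j) ej modnMml modnDm modnDml.
Qed.

Lemma circulant_linear_square n t c : t <= n -> circulant (linear_square n (n - t) t c).
Proof.
move=> le_tn i i' j j' ei ej; rewrite !mxE ei ej; congr (_.+1).
rewrite (linear_form_mod _ _ _ (erefl (i.+1 %% n)) (modn_mod j.+1 n)).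
have -> : i.+1 * (n - t) + j.+1 * t + c = i * (n - t) + j * t + c + n.
  by rewrite !mulSn; lia.
by rewrite modnDr.
Qed.

Lemma back_circulant_linear_square n t c : back_circulant (linear_square n t t c).
Proof.
move=> i i' j j' ei ej; rewrite !mxE ei ej; congr (_.+1).
rewrite (linear_form_mod _ _ _ (erefl (i %% n)) (modn_mod j.+1 n)).
by congr (_ %% _); rewrite !mulSn; lia.
Qed.

Lemma one_at_origin_linear_square n u t : one_at_origin (linear_square n u t 0).
Proof. by move=> i j i0 j0; rewrite mxE i0 j0 mod0n. Qed.

Lemma one_at_origin_linear_squareE n u t c :
  one_at_origin (linear_square n u t c) -> linear_square n u t c = linear_square n u t 0.
Proof.
move=> oA; apply/matrixP => i j; rewrite !mxE addn0.
have n_gt0 : 0 < n by apply: leq_ltn_trans (ltn_ord i).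
have := oA (Ordinal n_gt0) (Ordinal n_gt0) erefl erefl; rewrite mxE /= => -[c0].
by rewrite -modnDmr c0 addn0.
Qed.

Lemma linear_square0_col_step_inj n u u' t t' : 1 < n -> t < n -> t' < n ->
  linear_square n u t 0 = linear_square n u' t' 0 -> t = t'.
Proof.
move=> n_gt1 lt_t lt_t' /matrixP /(_ (Ordinal (ltnW n_gt1)) (Ordinal n_gt1)).
by rewrite !mxE /= !mul0n !mul1n !addn0 !modn_small // => -[].
Qed.

Lemma odd_half_pm1 h t : 0 < h -> t = h - 1 \/ t = h + 1 -> odd t = ~~ odd h.
Proof.
move=> h_gt0 [] ->; last by rewrite addn1.
by case: h h_gt0 => // h _; rewrite subn1 /= negbK.
Qed.

Lemma coprime_double_half_pm1 h t : ~~ odd h -> 0 < h ->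
  t = h - 1 \/ t = h + 1 -> coprime t h.*2.
Proof.
move=> even_h h_gt0 ht; rewrite -muln2 coprimeMr coprimen2 (odd_half_pm1 h_gt0 ht) even_h.
case: ht => ->; last by rewrite addn1 coprimeSn.
by case: h h_gt0 {even_h} => // h _; rewrite subn1 coprimenS.
Qed.

Lemma linear_square_not_latin h u t c :
  0 < h -> 2 %| t -> ~ latin (linear_square h.*2 u t c).
Proof.
move=> h_gt0 t_even [_ row_inj _].
have lt_0 : 0 < h.*2 by lia.
have lt_h : h < h.*2 by lia.
have ht : h.*2 %| h * t by rewrite -muln2 dvdn_pmul2l.
suff /(congr1 val) /= h0 : Ordinal lt_0 = Ordinal lt_h by rewrite -h0 in h_gt0.
by apply: (row_inj (Ordinal lt_0)); rewrite !mxE /= !mul0n !add0n -modnDml (eqP ht).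
Qed.

Lemma row_product_linear_square_shape n (A : 'M[nat]_n) : 1 < n -> row_product A ->
  circulant A \/ back_circulant A ->
  exists u t c,
    [/\ t < n, u = t %[mod n] \/ u + t = 0 %[mod n] & A = linear_square n u t c].
Proof.
move=> n_gt1 /row_product_prefix_sums[d [d' [c A_def]]] [cA | bA].
- have [t lt_t ->] := circulant_prefix_sums A_def n_gt1 cA.
  by exists (n - t), t, c; split=> //; right; rewrite subnK_modnn // ltnW.
- have [t lt_t ->] := back_circulant_prefix_sums A_def n_gt1 bA.
  by exists t, t, c; split=> //; left.
Qed.

Lemma odd_half_not_row_product h (A : 'M[nat]_h.*2) : odd h -> latin A ->
  circulant A \/ back_circulant A -> innerdist A = h - 1 -> ~ row_product A.
Proof.
move=> odd_h latA cbA idA rpA; have h_gt0 := odd_gt0 odd_h.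
have n_gt1 : 1 < h.*2 by lia.
have [u [t [c [lt_t ut Alin]]]] := row_product_linear_square_shape n_gt1 rpA cbA.
rewrite Alin in latA.
rewrite Alin innerdist_linear_square // shift_dist_double_eq // in idA.
apply: (linear_square_not_latin h_gt0 _ latA).
by rewrite dvdn2 (odd_half_pm1 h_gt0 idA) odd_h.
Qed.

Section EvenHalf.

Variable h : nat.
Hypotheses (even_h : ~~ odd h) (h_gt1 : 1 < h).

Let h_gt0 : 0 < h := ltnW h_gt1.
Let n_gt1 : 1 < h.*2. Proof. by lia. Qed.

Lemma circulant_row_productE (A : 'M[nat]_h.*2) :
  [/\ latin A, circulant A, innerdist A = h - 1, one_at_origin A & row_product A] <->
  A = linear_square h.*2 (h + 1) (h - 1) 0 \/ A = linear_square h.*2 (h - 1) (h + 1) 0.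
Proof.
have candidate_ok u t : t = h - 1 \/ t = h + 1 -> u = h.*2 - t ->
    [/\ latin (linear_square h.*2 u t 0), circulant (linear_square h.*2 u t 0),
      innerdist (linear_square h.*2 u t 0) = h - 1, one_at_origin (linear_square h.*2 u t 0)
    & row_product (linear_square h.*2 u t 0)].
  move=> ht ->; have lt_t : t < h.*2 by lia.
  have co_t := coprime_double_half_pm1 even_h h_gt0 ht.
  have co_u : coprime (h.*2 - t) h.*2 by apply: coprime_double_half_pm1; lia.
  split; [exact: latin_linear_square | exact/circulant_linear_square/ltnW | |
         exact: one_at_origin_linear_square | exact: row_product_linear_square].
  rewrite innerdist_linear_square ?shift_dist_double_eq //.
  by right; rewrite subnK_modnn // ltnW.
split.
- case=> _ cA idA oA /row_product_prefix_sums[d [d' [c A_def]]].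
  have [t lt_t Alin] := circulant_prefix_sums A_def n_gt1 cA.
  rewrite Alin in oA idA; rewrite Alin one_at_origin_linear_squareE //.
  move: idA; rewrite innerdist_linear_square ?shift_dist_double_eq //; last first.
    by right; rewrite subnK_modnn // ltnW.
  by case=> ->; [left | right]; congr linear_square; lia.
- by case=> ->; apply: candidate_ok; lia.
Qed.

Lemma back_circulant_row_productE (A : 'M[nat]_h.*2) :
  [/\ latin A, back_circulant A, innerdist A = h - 1, one_at_origin A & row_product A] <->
  A = linear_square h.*2 (h - 1) (h - 1) 0 \/ A = linear_square h.*2 (h + 1) (h + 1) 0.
Proof.
have candidate_ok t : t = h - 1 \/ t = h + 1 ->
    [/\ latin (linear_square h.*2 t t 0), back_circulant (linear_square h.*2 t t 0),
      innerdist (linear_square h.*2 t t 0) = h - 1, one_at_origin (linear_square h.*2 t t 0)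
    & row_product (linear_square h.*2 t t 0)].
  move=> ht; have lt_t : t < h.*2 by lia.
  have co_t := coprime_double_half_pm1 even_h h_gt0 ht.
  split; [exact: latin_linear_square | exact: back_circulant_linear_square | |
         exact: one_at_origin_linear_square | exact: row_product_linear_square].
  by rewrite innerdist_linear_square ?shift_dist_double_eq //; left.
split.
- case=> _ bA idA oA /row_product_prefix_sums[d [d' [c A_def]]].
  have [t lt_t Alin] := back_circulant_prefix_sums A_def n_gt1 bA.
  rewrite Alin in oA idA; rewrite Alin one_at_origin_linear_squareE //.
  move: idA; rewrite innerdist_linear_square ?shift_dist_double_eq //; last by left.
  by case=> ->; [left | right].
- by case=> ->; apply: candidate_ok; [left | right].
Qed.

End EvenHalf.

Theorem mainTheorem13 (n : nat) (hn : 6 <= n) (heven : ~~ odd n) :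
  (n %% 4 = 2 ->
     forall A : 'M[nat]_n, latin A -> (circulant A \/ back_circulant A) ->
       innerdist A = n./2 - 1 -> ~ row_product A) /\
  (n %% 4 = 0 ->
     (exists A1 A2 : 'M[nat]_n, A1 <> A2 /\
        forall A : 'M[nat]_n,
          [/\ latin A, circulant A, innerdist A = n./2 - 1,
              one_at_origin A & row_product A] <-> (A = A1 \/ A = A2)) /\
     (exists A1 A2 : 'M[nat]_n, A1 <> A2 /\
        forall A : 'M[nat]_n,
          [/\ latin A, back_circulant A, innerdist A = n./2 - 1,
              one_at_origin A & row_product A] <-> (A = A1 \/ A = A2))).
Proof.
have [h nE] : exists h, n = h.*2 by exists n./2; rewrite even_halfK.
subst n; rewrite doubleK; split=> [n_mod4 | n_mod4].
  by move=> A; apply: odd_half_not_row_product; lia.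
have even_h : ~~ odd h by lia.
have h_gt1 : 1 < h by lia.
split.
- exists (linear_square h.*2 (h + 1) (h - 1) 0), (linear_square h.*2 (h - 1) (h + 1) 0).
  by split; [move/linear_square0_col_step_inj; lia | exact: circulant_row_productE].
- exists (linear_square h.*2 (h - 1) (h - 1) 0), (linear_square h.*2 (h + 1) (h + 1) 0).
  by split; [move/linear_square0_col_step_inj; lia | exact: back_circulant_row_productE].
Qed.
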